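(* Suppose $k=n-q+2$ and let $x,y\in G\setminus K$ with $x\ne y$. Then there is $(v,w)\in\mathrm{diff}(\circ,\ast)$ such that $\{v,w,v\circ w\}\cap\{x,y\}=\emptyset$, $v\in G\setminus K$, and $w\in K$ or $v\circ w\in K$.
   Context: $G$ is a set of size $n$ and $G(\circ)$, $G(\ast)$ are distinct groups on $G$ with the same identity element $1$, and $\mathrm{dist}_1=0$. $\mathrm{diff}(\circ,\ast)=\{(a,b):a\circ b\ne a\ast b\}$, $\mathrm{dist}_a=|\{b:a\circ b\ne a\ast b\}|$; $K=\{a:\mathrm{dist}_a<n/3\}$, $k=|K|$; $q=\lceil n/3\rceil$. *)

From mathcomp Require Import all_boot.
Set Implicit Arguments. Unset Strict Implicit. Unset Printing Implicit Defensive.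

Definition is_group (T : Type) (op : T -> T -> T) (e : T) : Prop :=
  associative op /\ left_id e op /\ right_id e op /\
  (forall a, exists b, op b a = e /\ op a b = e).

Definition diffset (T : finType) (o s : T -> T -> T) : {set T * T} :=
  [set p | o p.1 p.2 != s p.1 p.2].

Definition dist (T : finType) (o s : T -> T -> T) (a : T) : nat :=
  #|[set b | o a b != s a b]|.

(* K = { a : dist_a < n/3 }, with n = |T|;  dist_a < n/3  <->  3 dist_a < n *)
Definition Kset (T : finType) (o s : T -> T -> T) : {set T} :=
  [set a | 3 * dist o s a < #|T|].

(* q = ceil(n/3) *)
Definition qval (n : nat) : nat := (n + 2) %/ 3.

(* Let B be the complement of K, so that |B| = q - 2.

   If |B| >= 3, pick v in B outside {x, y}; then dist_v >= q = |B| + 2. If no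
   w fits, every w with v ∘ w <> v ∗ w lies in B or in the preimage of {x, y}
   under v ∘ _, so these two sets exhaust the row of v and are disjoint. Left
   multiplication by v then maps B \ {x, y} into itself, hence onto itself, and
   v = v ∘ b forces b = 1, although 1 lies in K.

   If |B| = 2, then B = {x, y} and 10 <= n <= 12, so rows in K have at most 3
   defects and rows outside K at least 4. Choosing auxiliary elements outside
   the few bad ones shows that ∗ agrees with ∘ on K, that a ∗ b only depends on
   a ∘ b for a, b in K, and that this value differs from z = a ∘ b when z is x
   or y (otherwise row z would have at most 3 defects). A generic t in K then
   has the four defects x, y, t⁻¹ ∘ x, t⁻¹ ∘ y, which is impossible. *)

From mathcomp Require Import all_boot zify.
Set Implicit Arguments. Unset Strict Implicit.

Section GroupFacts.
Context {T : Type} {op : T -> T -> T} {e : T} (G : is_group op e).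

Lemma group_right_injective a : injective (op a).
Proof.
have [opA [op1x [_ opV]]] := G.
move=> b c eq_ab_ac; have [a' [a'a _]] := opV a.
by rewrite -[b]op1x -[c]op1x -a'a -!opA eq_ab_ac.
Qed.

Lemma group_left_injective a : injective (op^~ a).
Proof.
have [opA [_ [opx1 opV]]] := G.
move=> b c eq_ba_ca; have [a' [_ aa']] := opV a.
by rewrite -[b]opx1 -[c]opx1 -aa' !opA eq_ba_ca.
Qed.

Lemma group_ldiv a z : exists b, op a b = z.
Proof.
have [opA [op1x [_ opV]]] := G; have [a' [_ aa']] := opV a.
by exists (op a' z); rewrite opA aa' op1x.
Qed.

End GroupFacts.

Lemma group_stable_id (T : finType) (op : T -> T -> T) e (A : {set T}) v :
  is_group op e -> v \in A -> op v @: A \subset A -> e \in A.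
Proof.
move=> G vA vAA; have [_ [_ [opx1 _]]] := G.
have onto : op v @: A =i A.
  by apply/(subset_cardP _ vAA); rewrite card_imset //; exact: (group_right_injective G (a := v)).
have [b bA vb_v] := imsetP (etrans (onto v) vA).
suff -> : e = b by [].
by apply: (group_right_injective G (a := v)); rewrite /= opx1.
Qed.

Lemma exists_notin (T : finType) (A : {set T}) : #|A| < #|T| -> exists t, t \notin A.
Proof.
move=> ltAT; apply/existsP; rewrite -negb_forall; apply: contraTN ltAT.
by move/forallP=> allA; rewrite -leqNgt subset_leq_card //; apply/subsetP=> t _; exact: allA.
Qed.

Lemma cards2_le (T : finType) (a b : T) : #|[set a; b]| <= 2.
Proof. by rewrite cards2 ltnS leq_b1. Qed.

Lemma exists_notin4 (T : finType) (A B C D : {set T}) :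
  #|A| + #|B| + #|C| + #|D| < #|T| ->
  exists t, [/\ t \notin A, t \notin B, t \notin C & t \notin D].
Proof.
move=> small; have [|t] := @exists_notin _ (A :|: B :|: C :|: D).
  apply: leq_ltn_trans small; rewrite !(leq_trans (leq_card_setU _ _)) //.
  by rewrite leq_add2r !(leq_trans (leq_card_setU _ _)) // leq_add2r leq_card_setU.
by rewrite !inE !negb_or -!andbA => /and4P; exists t.
Qed.

Section DiffPartner.
Variables (T : finType) (o s : T -> T -> T) (e : T).
Hypotheses (Go : is_group o e) (Gs : is_group s e).

Local Notation K := (Kset o s).
Local Notation D a := [set b | o a b != s a b].

Lemma Kset_id : e \in K.
Proof.
have [_ [o1x _]] := Go; have [_ [s1x _]] := Gs.
have De : D e = set0 by apply/setP=> b; rewrite !inE o1x s1x eqxx.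
by rewrite inE /dist De cards0; apply/card_gt0P; exists e.
Qed.

Lemma exists_diff_partner (x y v : T) :
  x \notin K -> y \notin K -> v \notin K -> v \notin [set x; y] ->
  #|~: K| + 2 <= dist o s v ->
  exists w, [/\ (v, w) \in diffset o s, w \notin [set x; y],
                o v w \notin [set x; y] & (w \in K) || (o v w \in K)].
Proof.
move=> xK yK vK vxy large_v; set B := ~: K; set X := [set x; y].
have [/existsP[w /and4P[]] | /existsPn none] := boolP [exists w,
    [&& (v, w) \in diffset o s, w \notin X, o v w \notin X & (w \in K) || (o v w \in K)]].
  by exists w.
exfalso; set P := o v @^-1: X.
have cardP : #|P| <= 2.
  by rewrite card_preimset ?cards2_le //; exact: (group_right_injective Go (a := v)).
have DvBP : D v \subset B :|: P.
  apply/subsetP=> w; rewrite in_setU in_setC inE => wD.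
  have := none w; rewrite inE /= wD /= negb_and !negbK.
  case wK: (w \in K) => //=; rewrite andbT negbK => /orP[/set2P[] eq_w | ?]; last by rewrite inE.
    by move: xK; rewrite -eq_w wK.
  by move: yK; rewrite -eq_w wK.
have cardBP : #|B| + #|P| <= #|D v| by apply: leq_trans large_v; rewrite leq_add2l.
have DvE : D v = B :|: P.
  apply/eqP; rewrite eqEcard DvBP /=.
  exact: leq_trans (leq_card_setU B P).1 cardBP.
have BP_disj : [disjoint B & P].
  by rewrite -(leq_card_setU B P).2 eqn_leq (leq_card_setU B P).1 -DvE.
have stable : o v @: (B :\: X) \subset B :\: X.
  apply/subsetP=> z /imsetP[b]; rewrite in_setD => /andP[bX bB] ->{z}.
  have bD : b \in D v by rewrite DvE in_setU bB.
  have vbX : o v b \notin X by have := disjointFr BP_disj bB; rewrite in_set => ->.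
  rewrite inE in bD; have := none b; rewrite inE /= bD bX vbX /= negb_or.
  by case/andP=> _ vbK; rewrite in_setD in_setC vbX.
have vB' : v \in B :\: X by rewrite in_setD in_setC vxy.
by have := group_stable_id Go vB' stable; rewrite in_setD in_setC Kset_id andbF.
Qed.
End DiffPartner.

Section FewFarElements.
Variables (T : finType) (o s : T -> T -> T) (e x y : T).
Hypotheses (Go : is_group o e) (Gs : is_group s e).
Hypothesis card_T : 10 <= #|T| <= 12.
Hypothesis far_sub : ~: Kset o s \subset [set x; y].

Local Notation K := (Kset o s).
Local Notation X := [set x; y].
Local Notation D a := [set b | o a b != s a b].

Let oA : associative o. Proof. by case: Go. Qed.
Let sA : associative s. Proof. by case: Gs. Qed.

Lemma notK_X a : a \notin K -> a \in X.
Proof. by move=> aK; apply: (subsetP far_sub); rewrite in_setC. Qed.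

Lemma notin_X_K a : a \notin X -> a \in K.
Proof. by apply: contraR; exact: notK_X. Qed.

Lemma notin_preim (f : T -> T) t : t \notin f @^-1: X -> f t \in K.
Proof. by move=> ftX; apply: notin_X_K; rewrite inE in ftX. Qed.

Lemma card_preim_l c (A : {set T}) : #|o c @^-1: A| = #|A|.
Proof. exact/card_preimset/(group_right_injective Go). Qed.

Lemma card_preim_r c (A : {set T}) : #|o^~ c @^-1: A| = #|A|.
Proof. exact/card_preimset/(group_left_injective Go). Qed.

Lemma card_diff_K a : a \in K -> #|D a| <= 3.
Proof. by rewrite inE /dist; lia. Qed.

Lemma card_diff_notK a : a \notin K -> 4 <= #|D a|.
Proof. by rewrite inE /dist; lia. Qed.

Lemma notin_diff a b : (b \notin D a) = (o a b == s a b).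
Proof. by rewrite inE negbK. Qed.

Lemma star_eq_o a b : a \in K -> b \in K -> o a b \in K -> s a b = o a b.
Proof.
move=> aK bK abK.
have [|t [tb tba tab _]] := @exists_notin4 _ (D b) (o b @^-1: D a) (D (o a b)) set0.
  rewrite card_preim_l cards0.
  by have := card_diff_K aK; have := card_diff_K bK; have := card_diff_K abK; lia.
move: tb tba tab; rewrite !notin_diff inE notin_diff => /eqP bt /eqP abt /eqP ab_t.
by apply: (group_left_injective Gs (a := t)); rewrite /= -ab_t -oA abt bt sA.
Qed.

Lemma star_assoc_r a b t : a \in K -> b \in K -> t \in K -> o b t \in K ->
  o (o a b) t \in K -> o (o a b) t = s (s a b) t.
Proof.
move=> aK bK tK btK; rewrite -oA => abtK.
by rewrite -(star_eq_o aK btK abtK) -(star_eq_o bK tK btK) sA.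
Qed.

Lemma star_assoc_l t a b : t \in K -> a \in K -> b \in K -> o t a \in K ->
  o t (o a b) \in K -> o t (o a b) = s t (s a b).
Proof.
move=> tK aK bK taK; rewrite oA => tabK.
by rewrite -(star_eq_o taK bK tabK) -(star_eq_o tK aK taK) sA.
Qed.

Lemma star_factor_congr a1 b1 a2 b2 : a1 \in K -> b1 \in K -> a2 \in K -> b2 \in K ->
  o a1 b1 = o a2 b2 -> s a1 b1 = s a2 b2.
Proof.
move=> a1K b1K a2K b2K eq12.
have [|t [/notin_X_K tK /notin_preim b1tK /notin_preim b2tK /notin_preim abtK]] :=
  @exists_notin4 _ X (o b1 @^-1: X) (o b2 @^-1: X) (o (o a1 b1) @^-1: X).
  by rewrite !card_preim_l; have := cards2_le x y; lia.
apply: (group_left_injective Gs (a := t)).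
by rewrite /= -star_assoc_r // eq12 star_assoc_r // -eq12.
Qed.

Lemma exists_factor z c : exists a b,
  [/\ a \in K, b \in K, o c a \in K, o b c \in K & o a b = z].
Proof.
have [|a [aX ca ax ay]] := @exists_notin4 _ X (o c @^-1: X)
  (o^~ x @^-1: [set z; o z c]) (o^~ y @^-1: [set z; o z c]).
  by rewrite card_preim_l !card_preim_r; have := cards2_le x y; have := cards2_le z (o z c); lia.
have [b ab] := group_ldiv Go a z.
exists a, b; split=> //; [exact: notin_X_K | | exact: notin_preim |];
  apply: notin_X_K; apply/set2P.
  by case=> b_eq; [move: ax | move: ay]; rewrite !inE -b_eq ab eqxx.
by case=> bc_eq; [move: ax | move: ay]; rewrite !inE -bc_eq oA ab eqxx orbT.
Qed.

Lemma star_factor_r a b t : a \in K -> b \in K -> t \in K ->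
  o (o a b) t \in K -> o (o a b) t = s (s a b) t.
Proof.
move=> aK bK tK abtK; have [a' [b' [a'K b'K _ b't a'b']]] := exists_factor (o a b) t.
by rewrite -a'b' star_assoc_r ?a'b' // (star_factor_congr a'K b'K aK bK a'b').
Qed.

Lemma star_factor_l t a b : t \in K -> a \in K -> b \in K ->
  o t (o a b) \in K -> o t (o a b) = s t (s a b).
Proof.
move=> tK aK bK tabK; have [a' [b' [a'K b'K ta' _ a'b']]] := exists_factor (o a b) t.
by rewrite -a'b' star_assoc_l ?a'b' // (star_factor_congr a'K b'K aK bK a'b').
Qed.

Lemma star_factor_neq a b : a \in K -> b \in K -> o a b \notin K -> s a b != o a b.
Proof.
move=> aK bK abK; apply/eqP=> sab; have [_ [_ [ox1 _]]] := Go; have [_ [_ [sx1 _]]] := Gs.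
have Dsub : D (o a b) \subset (X :|: o (o a b) @^-1: X) :\ e.
  apply/subsetP=> t; rewrite inE => tD; rewrite in_setD1.
  apply/andP; split; first by apply: contraTneq tD => ->; rewrite ox1 sx1 eqxx.
  apply/negPn/negP; rewrite in_setU => /norP[/notin_X_K tK /notin_preim abtK].
  by move: tD; rewrite star_factor_r // sab eqxx.
have eP : e \in X :|: o (o a b) @^-1: X.
  by apply/setUP; right; rewrite inE ox1; exact: notK_X.
have := cardsD1 e (X :|: o (o a b) @^-1: X); rewrite eP /=.
have := (leq_card_setU X (o (o a b) @^-1: X)).1; rewrite card_preim_l.
by have := cards2_le x y; have := subset_leq_card Dsub; have := card_diff_notK abK; lia.
Qed.

Lemma pair_sub_diff t z u : z \notin K -> t \in K -> u \in K -> o t z \in K ->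
  o t u = z -> [set z; u] \subset D t.
Proof.
move=> zK tK uK tzK tu; have [a [b [aK bK _ _ ab]]] := exists_factor z e.
have sab : s a b != z by rewrite -ab star_factor_neq ?ab.
apply/subsetP=> w /set2P[]->; rewrite inE.
  rewrite -{1}ab star_factor_l ?ab //.
  by apply: contra sab => /eqP/(group_right_injective Gs)->.
by rewrite tu (star_factor_congr tK uK aK bK) ?ab // eq_sym.
Qed.

Lemma far_pair_absurd : x != y -> x \notin K -> y \notin K -> False.
Proof.
move=> x_neq_y xK yK; have [_ [o1x _]] := Go.
have [|t [/notin_X_K tK te tx ty]] :=
  @exists_notin4 _ X [set e] (o^~ x @^-1: [set y]) (o^~ y @^-1: [set x]).
  by rewrite !card_preim_r !cards1; have := cards2_le x y; lia.
rewrite !inE in te tx ty.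
have tz_z z : o t z != z.
  by apply: contra te => /eqP tz; apply/eqP/(group_left_injective Go (a := z)); rewrite /= tz o1x.
have [u1 tu1] := group_ldiv Go t x; have [u2 tu2] := group_ldiv Go t y.
have txK : o t x \in K.
  by apply: notin_X_K; apply/set2P=> -[] /eqP; rewrite ?(negbTE (tz_z x)) ?(negbTE tx).
have tyK : o t y \in K.
  by apply: notin_X_K; apply/set2P=> -[] /eqP; rewrite ?(negbTE (tz_z y)) ?(negbTE ty).
have u1K : u1 \in K.
  apply: notin_X_K; apply/set2P=> -[] u1_eq; move: tu1; rewrite u1_eq => /eqP.
    by rewrite (negbTE (tz_z x)).
  by rewrite (negbTE ty).
have u2K : u2 \in K.
  apply: notin_X_K; apply/set2P=> -[] u2_eq; move: tu2; rewrite u2_eq => /eqP.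
    by rewrite (negbTE tx).
  by rewrite (negbTE (tz_z y)).
have /subsetP Dx := pair_sub_diff xK tK u1K txK tu1.
have /subsetP Dy := pair_sub_diff yK tK u2K tyK tu2.
have u1_neq_u2 : u1 != u2 by apply: contra x_neq_y => /eqP u12; rewrite -tu1 -tu2 u12.
have farD : X \subset D t :\: K.
  apply/subsetP=> w /set2P[]->; rewrite in_setD ?xK ?yK.
    by apply: Dx; rewrite set21.
  by apply: Dy; rewrite set21.
have nearD : [set u1; u2] \subset D t :&: K.
  apply/subsetP=> w /set2P[]->; rewrite in_setI ?u1K ?u2K andbT.
    by apply: Dx; rewrite set22.
  by apply: Dy; rewrite set22.
have := leq_add (subset_leq_card nearD) (subset_leq_card farD).
by rewrite !cards2 x_neq_y u1_neq_u2 cardsID => /leq_trans/(_ (card_diff_K tK)).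
Qed.

End FewFarElements.

Theorem lemma10p7 (T : finType) (o s : T -> T -> T) (e : T)
  (Go : is_group o e) (Gs : is_group s e) (hdist : o <> s)
  (hk : #|Kset o s| = #|T| - qval #|T| + 2)
  (x y : T) (hx : x \notin Kset o s) (hy : y \notin Kset o s) (hxy : x != y) :
  exists v w : T,
    [/\ (v, w) \in diffset o s,
        [disjoint [set v; w; o v w] & [set x; y]],
        v \notin Kset o s &
        (w \in Kset o s) || (o v w \in Kset o s)].
Proof.
have card_far : #|~: Kset o s| + 2 = qval #|T|.
  by have := cardsC (Kset o s); rewrite /qval in hk *; lia.
have xy_far : [set x; y] \subset ~: Kset o s.
  by apply/subsetP=> z /set2P[]->; rewrite in_setC.
have [many_far | few_far] := ltnP 2 #|~: Kset o s|.
  have [v vK vxy] : exists2 v, v \in ~: Kset o s & v \notin [set x; y].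
    apply/subsetPn; apply: contraL many_far => /subset_leq_card le_far.
    by rewrite -leqNgt (leq_trans le_far) ?cards2_le.
  rewrite in_setC in vK.
  have dist_v : #|~: Kset o s| + 2 <= dist o s v.
    by move: vK; rewrite card_far inE /qval -leqNgt; lia.
  have [w [vw wxy vwxy wK]] := exists_diff_partner Go Gs hx hy vK vxy dist_v.
  exists v, w; split=> //.
  by rewrite disjoints_subset !subUset !sub1set !in_setC vxy wxy vwxy.
have far_xy : ~: Kset o s = [set x; y].
  by apply/eqP; rewrite eq_sym eqEcard xy_far cards2 hxy.
have card_T : 10 <= #|T| <= 12.
  by move: card_far; rewrite far_xy cards2 hxy /qval; lia.
have far_sub : ~: Kset o s \subset [set x; y] by rewrite far_xy.
by case: (far_pair_absurd Go Gs card_T far_sub hxy hx hy).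
Qed.
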